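(* Let $T$ be a triangulation of an unpunctured bordered surface $(S,M)$, $Q=Q_{\overline T}$ and $F_1,\dots,F_n$ the associated exchange polynomials. If $F_i=F_j$ for some $i\neq j$, then $Q$ contains neither a subquiver $\tilde k\leftarrow i\rightarrow k$ nor a double arrow $i\xrightarrow{2}k$, for any vertex $k$ of $Q$.
   Context: $(S,M)$: compact surface (possibly non-orientable) with nonempty boundary, marked points $M\subset\partial S$ meeting every boundary component, no punctures, not a monogon/digon/triangle (boundary segments may or may not receive variables; if not, their quiver vertices are deleted). Quasi-arcs: arcs (up to isotopy) not bounding a Möbius strip with one marked point, and one-sided simple closed curves; compatible = disjoint, or the unique arc and one-sided curve in a Möbius strip with one marked point. Triangulation: maximal compatible set without one-sided curves. Double cover and quiver: replace each cross-cap by a cylinder to get $\tilde S$, glue two copies along new cylinder boundaries by the antipodal map (two oppositely oriented copies if $S$ orientable); $T$ lifts to $\overline T$ with lifts $i,\tilde i$ ($\tilde{\tilde i}=i$). $Q_{\overline T}$: vertices arcs (and boundary segments with variables) of $\overline T$; arrow $i\to j$ for each triangle where $j$ follows $i$ in the orientation; 2-cycles cancelled; $b_{ij}$ = (arrows $i\to j$) $-$ (arrows $j\to i$). $F_j=\prod_{b_{ij}+b_{\tilde ij}>0}x_i^{b_{ij}+b_{\tilde ij}}+\prod_{b_{ij}+b_{\tilde ij}<0}x_i^{-(b_{ij}+b_{\tilde ij})}$ over twin-pair representatives $i$. *)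

(* Combinatorial model of a triangulation of an unpunctured
   bordered surface as a gluing of ideal triangles. *)
From mathcomp Require Import all_boot all_algebra.
From mathcomp Require Import mpoly.
Set Implicit Arguments. Unset Strict Implicit. Unset Printing Implicit Defensive.
Import GRing.Theory Num.Theory.

(* Triangle t has corners 0,1,2 (in the order of its local orientation);
   side (t,c) runs from corner c to corner c+1 (mod 3). *)
Definition side (n : nat) := ('I_n * 'I_3)%type.

(* glue s = Some (s', b): side s is glued to side s' (an arc of T);
   b = false: orientation-compatible gluing (start of s ~ end of s'),
   b = true : twisted gluing (start of s ~ start of s').
   glue s = None : s is a boundary segment. *)
Definition gluing (n : nat) := side n -> option (side n * bool).

Section Defs.
Variables (n : nat) (glue : gluing n).

Definition sstart (s : side n) : side n := s.            (* corner = (t,c) *)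
Definition send (s : side n) : side n := (s.1, ordS s.2).

Definition cadj : rel (side n) := fun x y =>
  [exists s : side n, exists s' : side n, exists b : bool,
     (glue s == Some (s', b)) &&
     (((x == sstart s) && (y == (if b then sstart s' else send s'))) ||
      ((x == send s) && (y == (if b then send s' else sstart s'))))].

Definition free_corner (x : side n) : bool :=
  (glue x == None) || (glue (x.1, ord_pred x.2) == None).

Definition tadj : rel 'I_n := fun t t' =>
  [exists c : 'I_3, exists c' : 'I_3, exists b : bool,
     glue (t, c) == Some ((t', c'), b)].

Record is_triangulation : Prop := {
  glue_sym : forall s s' b, glue s = Some (s', b) -> glue s' = Some (s, b);
  glue_irr : forall s s' b, glue s = Some (s', b) -> s' <> s;
  surf_connected : forall t t', connect tadj t t';
  (* no punctures: every marked point (class of corners) lies on the boundary *)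
  no_punctures : forall x, exists y, connect cadj x y && free_corner y;
  (* (S,M) is not a single triangle (monogon/digon admit no triangulation) *)
  not_triangle : exists s, glue s != None;
  (* no arc bounds a Mobius strip with one marked point *)
  no_M1_arc : forall (t : 'I_n) (c : 'I_3),
      glue (t, c) = Some ((t, ordS c), true) -> glue (t, ordS (ordS c)) = None
}.

(* triangle (t,e) of the cover: e = false keeps the orientation of t,
   e = true reverses it; (t,e) and (t,~~e) are twins. *)
Definition cside := (('I_n * bool) * 'I_3)%type.
Definition proj (x : cside) : side n := (x.1.1, x.2).
Definition lift (s : side n) (e : bool) : cside := ((s.1, e), s.2).
Definition twin (x : cside) : cside := ((x.1.1, ~~ x.1.2), x.2).

Definition cpartner (x : cside) : option cside :=
  match glue (proj x) with
  | Some (s', b) => Some (lift s' (x.1.2 (+) b))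
  | None => None
  end.

Definition same_edge (x y : cside) : bool := (x == y) || (cpartner x == Some y).

Definition cnext (x : cside) : cside :=
  (x.1, if x.1.2 then ord_pred x.2 else ordS x.2).

(* number of arrows (before cancelling 2-cycles) from edge x to edge y *)
Definition narrows (x y : cside) : nat :=
  #|[pred u : cside | same_edge u x && same_edge (cnext u) y]|.

Definition bq (x y : cside) : int := (narrows x y)%:Z - (narrows y x)%:Z.

Variable bv : pred (side n). (* boundary segments that carry a variable *)

(* the edge of T through side s is a vertex of Q (arc, or boundary
   segment with a variable) *)
Definition isQv (s : side n) : bool := (glue s != None) || bv s.

Definition trep (s : side n) : side n :=
  match glue s with
  | Some (s', _) => if (enum_rank s' < enum_rank s)%N then s' else s
  | None => s
  end.

Definition expo (r j : side n) : int :=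
  bq (lift r false) (lift j false) + bq (lift r true) (lift j false).

Local Open Scope ring_scope.
Definition Fpoly (j : side n) : {mpoly int[#|{: side n}|]} :=
  \prod_(r : side n | (trep r == r) && isQv r && (0 < expo r j))
      'X_(enum_rank r) ^+ absz (expo r j)
  + \prod_(r : side n | (trep r == r) && isQv r && (expo r j < 0))
      'X_(enum_rank r) ^+ absz (expo r j).

End Defs.

(* Write bsum v k for b_vk + b_{v~k}.  Evaluating F_j at x_r = 2 and the other
   variables at 1 gives 2^|b_rj + b_{~r j}| + 1, so F_i = F_j forces
   |bsum i k| = |bsum j k| for every vertex k.  Both forbidden configurations
   give |bsum i k| >= 2 (for a double arrow i -> k because two arrows leave no
   room in their triangles for an arrow ~k -> i), hence |bsum j k| >= 2 too.
   As |bsum x k| is at most the number of pairs of distinct sides of x and k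
   lying in a common triangle, each of i and j forms two such pairs with k.
   If the sides of k lie in two triangles, the sides of i, j and k fill both,
   which then close up into a surface without boundary, impossible without
   punctures; if they lie in one triangle, it would need four sides.  If k is
   the arc i itself (or j), the triangle containing both sides of i is
   self-folded, so its third side is a boundary segment and j cannot reach it. *)

From Pilot Require Import Defs.
From mathcomp Require Import all_boot all_algebra.
From mathcomp Require Import mpoly.
From mathcomp Require Import zify.
Set Implicit Arguments. Unset Strict Implicit. Unset Printing Implicit Defensive.
Import GRing.Theory Num.Theory.
Local Open Scope ring_scope.

Lemma ord3_cases (c s : 'I_3) : [\/ s = c, s = ordS c | s = ordS (ordS c)].
Proof.
case: c s => [[|[|[|?]]] ?] // [[|[|[|?]]] ?] //.
all: by [apply: Or31; apply: val_inj | apply: Or32; apply: val_inj | apply: Or33; apply: val_inj].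
Qed.

Lemma ordS3 (c : 'I_3) : ordS (ordS (ordS c)) = c.
Proof. by apply: val_inj; case: c => [[|[|[|?]]] ?]. Qed.

Lemma connect_invariant (T : finType) (e : rel T) (P : pred T) (x y : T) :
  (forall a b, P a -> e a b -> P b) -> P x -> connect e x y -> P y.
Proof.
move=> He Px /connectP [p pth ->]; elim: p x Px pth => [|z p IH] x Px //=.
by case/andP=> Hxz Hp; apply: IH (He _ _ Px Hxz) Hp.
Qed.

Lemma no_four_sides_in_triangle n (s1 s2 s3 s4 : side n) :
  s1.1 = s2.1 -> s1.1 = s3.1 -> s1.1 = s4.1 ->
  s1 != s2 -> s1 != s3 -> s1 != s4 -> s2 != s3 -> s2 != s4 -> s3 != s4 -> False.
Proof.
case: s1 s2 s3 s4 => [t c1] [t2 c2] [t3 c3] [t4 c4] /= <- <- <-.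
rewrite !xpair_eqE !eqxx /= -!val_eqE.
by case: c1 c2 c3 c4 => [[|[|[|?]]] ?] [[|[|[|?]]] ?] [[|[|[|?]]] ?] [[|[|[|?]]] ?].
Qed.

Lemma card_two_triangles n (A B : 'I_n) :
  A != B -> #|[pred s : side n | (s.1 == A) || (s.1 == B)]| = 6%N.
Proof.
move=> nAB; have uAB : uniq [:: A; B] by rewrite /= inE nAB.
transitivity (#|[:: A; B]| * #|'I_3|)%N; last by rewrite card_ord (card_uniqP uAB).
by rewrite -cardX; apply: eq_card => -[t c]; rewrite !inE andbT.
Qed.

Lemma two_triangles_uniq_cover n (A B : 'I_n) (W : seq (side n)) :
  A != B -> uniq W -> size W = 6%N -> (forall w, w \in W -> (w.1 == A) || (w.1 == B)) ->
  forall s : side n, (s.1 == A) || (s.1 == B) -> s \in W.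
Proof.
move=> nAB uW sW HW s Hs.
have subW : W \subset [pred s : side n | (s.1 == A) || (s.1 == B)].
  by apply/subsetP => w /HW.
have cardW : #|W| = #|[pred s : side n | (s.1 == A) || (s.1 == B)]|.
  by rewrite card_two_triangles // (card_uniqP uW).
by rewrite ((subset_cardP cardW subW) s) inE.
Qed.

Section Triangulation.
Variables (n : nat) (glue : gluing n).
Hypothesis HT : is_triangulation glue.

Local Notation se := (same_edge glue).
Local Notation cp := (cpartner glue).

(** * The orientation double cover *)

Lemma twinK : involutive (@twin n).
Proof. by case=> [[t e] c]; rewrite /twin /= negbK. Qed.

Lemma proj_twin (x : cside n) : proj (twin x) = proj x.
Proof. by []. Qed.

Lemma twin_neq (x : cside n) : twin x != x.
Proof. by case: x => [[t e] c]; apply/eqP => -[]; case: e. Qed.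

Lemma proj_lift (s : side n) e : proj (Defs.lift s e) = s.
Proof. by case: s. Qed.

Lemma proj_sheet_inj (x y : cside n) : proj x = proj y -> x.1.2 = y.1.2 -> x = y.
Proof. by case: x y => [[t e] c] [[t' e'] c'] [/= -> ->] /= ->. Qed.

Lemma cnext_twin_cnext (u : cside n) : cnext (twin (cnext u)) = twin u.
Proof.
case: u => [[t e] c]; rewrite /cnext /twin /=; congr (_, _).
by case: e => /=; apply: val_inj; case: c => [[|[|[|]]] ?].
Qed.

Lemma proj_cnext_neq (u : cside n) : proj (cnext u) != proj u.
Proof.
case: u => [[t e] c]; rewrite /proj /cnext /= xpair_eqE eqxx -val_eqE /=.
by case: e; case: c => [[|[|[|]]] ?].
Qed.

Lemma proj_cnext_inj (u w : cside n) :
  proj u = proj w -> proj (cnext u) = proj (cnext w) -> u = w.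
Proof.
case: u w => [[t e] c] [[t' e'] c']; rewrite /proj /cnext /= => -[-> ->] [].
by case: e e' => [] [] //= /(congr1 val); case: c' => [[|[|[|]]] ?].
Qed.

Lemma proj_cnext_swap (u w : cside n) :
  proj u = proj (cnext w) -> proj (cnext u) = proj w -> cnext w = twin u.
Proof.
case: u w => [[t e] c] [[t' e'] c']; rewrite /proj /cnext /twin /= => -[-> ->] [].
by case: e e' => [] [] //= /(congr1 val); case: c' => [[|[|[|]]] ?].
Qed.

Lemma cpartner_twin (x : cside n) : cp (twin x) = omap (@twin n) (cp x).
Proof.
rewrite /cpartner proj_twin; case: (glue (proj x)) => [[s b]|] //=.
by rewrite /twin /lift /= addNb.
Qed.

Lemma cpartner_sym (x y : cside n) : cp x = Some y -> cp y = Some x.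
Proof.
rewrite /cpartner; case E: (glue (proj x)) => [[s b]|] //= [<-].
rewrite proj_lift (glue_sym HT E) /=; congr Some.
by apply: proj_sheet_inj; rewrite ?proj_lift //= -addbA addbb addbF.
Qed.

Lemma cpartner_glue (y w : cside n) : cp y = Some w ->
  exists b, glue (proj y) = Some (proj w, b).
Proof.
by rewrite /cpartner; case: (glue (proj y)) => [[s b]|] //= [<-]; exists b; rewrite proj_lift.
Qed.

Lemma cpartner_proj_neq (y w : cside n) : cp y = Some w -> proj w != proj y.
Proof. by case/cpartner_glue=> b /(glue_irr HT)/eqP. Qed.

Lemma same_edge_refl (x : cside n) : se x x.
Proof. by rewrite /same_edge eqxx. Qed.

Lemma same_edge_sym (x y : cside n) : se x y -> se y x.
Proof.
rewrite /same_edge => /orP[/eqP->|/eqP/cpartner_sym->]; by rewrite eqxx ?orbT.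
Qed.

Lemma same_edge_trans (a b c : cside n) : se a b -> se b c -> se a c.
Proof.
rewrite /same_edge => /orP[/eqP->//|/eqP Hab] /orP[/eqP<-|/eqP Hbc].
  by rewrite Hab eqxx orbT.
by move/cpartner_sym: Hab; rewrite Hbc => -[->]; rewrite eqxx.
Qed.

Lemma same_edgeE (x x' u : cside n) : se x x' -> se u x = se u x'.
Proof.
move=> Hx; apply/idP/idP => Hu; first exact: same_edge_trans Hu Hx.
exact: same_edge_trans Hu (same_edge_sym Hx).
Qed.

Lemma same_edge_twin (u x : cside n) : se (twin u) (twin x) = se u x.
Proof.
rewrite /same_edge cpartner_twin (inj_eq (can_inj twinK)).
by case: (cp u) => [y|] //=; rewrite !(inj_eq (@Some_inj _)) (inj_eq (can_inj twinK)).
Qed.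

Lemma same_edge_proj_inj (a a' b : cside n) :
  se a b -> se a' b -> proj a = proj a' -> a = a'.
Proof.
move=> Ha Ha' Hp; have := same_edge_trans Ha (same_edge_sym Ha').
rewrite /same_edge => /orP[/eqP //|/eqP /cpartner_proj_neq].
by rewrite Hp eqxx.
Qed.

Lemma same_edge_twin_excl (u x : cside n) : se u x -> ~~ se u (twin x).
Proof.
move=> Hu; rewrite -same_edge_twin twinK; apply/negP => Htu.
have := same_edge_trans Htu (same_edge_sym Hu).
rewrite /same_edge (negbTE (twin_neq u)) /= => /eqP/cpartner_proj_neq.
by rewrite proj_twin eqxx.
Qed.

Lemma narrows_same_edge (x x' y y' : cside n) :
  se x x' -> se y y' -> narrows glue x y = narrows glue x' y'.
Proof.
move=> Hx Hy; apply: eq_card => u /=.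
by rewrite !inE (same_edgeE u Hx) (same_edgeE (cnext u) Hy).
Qed.

Lemma bq_same_edge (x x' y y' : cside n) :
  se x x' -> se y y' -> bq glue x y = bq glue x' y'.
Proof. by move=> Hx Hy; rewrite /bq (narrows_same_edge Hx Hy) (narrows_same_edge Hy Hx). Qed.

Lemma bq_loop (x y : cside n) : se x y -> bq glue x y = 0.
Proof. by move=> Hxy; rewrite (bq_same_edge (same_edge_refl x) (same_edge_sym Hxy)) /bq subrr. Qed.

(* The involution [u |-> twin (cnext u)] reverses arrows. *)
Lemma narrows_twin (x y : cside n) :
  narrows glue (twin x) (twin y) = narrows glue y x.
Proof.
pose f (u : cside n) := twin (cnext u).
have fK : involutive f by move=> u; rewrite /f cnext_twin_cnext twinK.
rewrite /narrows -(card_image (can_inj fK)); apply: eq_card => u.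
rewrite -[u]fK (mem_image (can_inj fK)) !inE /f cnext_twin_cnext.
by rewrite -[se (twin _) (twin x)]same_edge_twin !twinK same_edge_twin andbC.
Qed.

Lemma bq_twin (x y : cside n) : bq glue (twin x) (twin y) = - bq glue x y.
Proof. by rewrite /bq !narrows_twin opprB. Qed.

(** * Edges of the triangulation *)

Definition same_tedge (s a : side n) : bool :=
  (a == s) || (if glue s is Some (s', _) then a == s' else false).

Lemma same_tedge_refl s : same_tedge s s.
Proof. by rewrite /same_tedge eqxx. Qed.

Lemma same_tedge_sym s a : same_tedge s a -> same_tedge a s.
Proof.
rewrite /same_tedge => /orP[/eqP->|]; first by rewrite eqxx.
case E: (glue s) => [[s' b]|] // /eqP->.
by rewrite (glue_sym HT E) eqxx orbT.
Qed.

Lemma same_tedgeC s a : same_tedge s a = same_tedge a s.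
Proof. by apply/idP/idP; apply: same_tedge_sym. Qed.

Lemma same_tedge_trans s a c : same_tedge s a -> same_tedge a c -> same_tedge s c.
Proof.
rewrite /same_tedge => /orP[/eqP->//|]; case E: (glue s) => [[s' b]|] // /eqP->.
by rewrite (glue_sym HT E) => /orP[/eqP->|/eqP->]; rewrite eqxx ?orbT.
Qed.

Lemma same_tedge_le2 s a b c : same_tedge s a -> same_tedge s b -> same_tedge s c ->
  [\/ a = b, a = c | b = c].
Proof.
rewrite /same_tedge; case: (glue s) => [[s' x]|]; rewrite ?orbF; last first.
  by move=> /eqP-> /eqP-> /eqP->; apply: Or31.
by do 3 case/orP=> /eqP->; by [apply: Or31 | apply: Or32 | apply: Or33].
Qed.

Lemma same_tedge_neq x y a b :
  ~~ same_tedge x y -> same_tedge x a -> same_tedge y b -> a != b.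
Proof.
move=> Nxy Ha Hb; apply: contraNneq Nxy => Eab.
by apply: same_tedge_trans Ha _; rewrite Eab; apply: same_tedge_sym.
Qed.

Lemma same_tedge_glued x a : glue x != None -> same_tedge x a -> glue a != None.
Proof.
rewrite /same_tedge; case E: (glue x) => [[s b]|] // _ /orP[/eqP->|/eqP->].
  by rewrite E.
by rewrite (glue_sym HT E).
Qed.

Lemma same_tedge_partner x s s' b :
  same_tedge x s -> glue s = Some (s', b) -> same_tedge x s'.
Proof. by move=> Hs Hg; apply: same_tedge_trans Hs _; rewrite /same_tedge Hg eqxx orbT. Qed.

Lemma same_tedge_two_glued z p q : same_tedge z p -> same_tedge z q -> p != q ->
  glue z != None.
Proof.
by rewrite /same_tedge; case: (glue z) => [//|]; rewrite !orbF => /eqP-> /eqP->; rewrite eqxx.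
Qed.

Lemma same_tedge_glue s a : same_tedge s a -> a != s -> exists b, glue s = Some (a, b).
Proof.
rewrite /same_tedge => /orP[->//|]; case: (glue s) => [[s' b]|] // /eqP->.
by exists b.
Qed.

Lemma same_edge_tedge (u x : cside n) : se u x -> same_tedge (proj x) (proj u).
Proof.
rewrite /same_edge => /orP[/eqP->|/eqP/cpartner_glue[b E]].
  exact: same_tedge_refl.
by apply: same_tedge_sym; rewrite /same_tedge E eqxx orbT.
Qed.

Lemma proj_eq_twin (x y : cside n) : proj y = proj x -> y = x \/ y = twin x.
Proof.
move=> Hp; case: (boolP (y.1.2 == x.1.2)) => He; [left | right].
  exact: proj_sheet_inj (eqP He).
by apply: proj_sheet_inj => //=; move: He; case: (y.1.2); case: (x.1.2).
Qed.

Lemma same_tedge_edge (x w : cside n) :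
  same_tedge (proj x) (proj w) -> se w x || se w (twin x).
Proof.
rewrite /same_tedge => /orP[/eqP/proj_eq_twin[->|->]|].
- by rewrite same_edge_refl.
- by rewrite same_edge_refl orbT.
case E: (glue (proj x)) => [[s' b]|] // /eqP Hs.
have [y Hy Hpy] : exists2 y, cp w = Some y & proj y = proj x.
  exists (Defs.lift (proj x) (w.1.2 (+) b)); last exact: proj_lift.
  by rewrite /cpartner Hs (glue_sym HT E).
by case: (proj_eq_twin Hpy) Hy => -> Hy; rewrite /same_edge Hy eqxx !orbT.
Qed.

Lemma same_tedge_trep s : same_tedge s (trep glue s).
Proof.
rewrite /trep /same_tedge; case: (glue s) => [[s' b]|]; last by rewrite eqxx.
by case: ifP; rewrite eqxx ?orbT.
Qed.

Lemma trep_same_tedge a b : same_tedge a b -> trep glue a = trep glue b.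
Proof.
rewrite /same_tedge => /orP[/eqP->//|]; case E: (glue a) => [[s b0]|] // /eqP Hb.
subst s; have Nab : enum_rank b != enum_rank a.
  by rewrite (inj_eq enum_rank_inj); apply/eqP; apply: (glue_irr HT E).
rewrite /trep E (glue_sym HT E); case: ltngtP => // /val_inj Eab.
by rewrite Eab eqxx in Nab.
Qed.

Lemma trep_id s : trep glue (trep glue s) = trep glue s.
Proof. by rewrite -(trep_same_tedge (same_tedge_trep s)). Qed.

Lemma isQv_trep bv s : isQv glue bv s -> isQv glue bv (trep glue s).
Proof.
rewrite /isQv /trep; case E: (glue s) => [[s' b]|] //= Hq; last by rewrite E.
by case: ifP; rewrite ?(glue_sym HT E) ?E.
Qed.

(** * Arrows and common triangles *)

Definition bsum (v k : cside n) : int := bq glue v k + bq glue v (twin k).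

Lemma bsum_twinr (v k : cside n) : bsum v (twin k) = bsum v k.
Proof. by rewrite /bsum twinK; lia. Qed.

Lemma bsum_twinl (v k : cside n) : bsum (twin v) k = - bsum v k.
Proof. by rewrite /bsum -{1}[k]twinK !bq_twin; lia. Qed.

Lemma bsum_same_edge (v v' k k' : cside n) : se v v' -> se k k' -> bsum v k = bsum v' k'.
Proof.
move=> Hv Hk; have Hk' : se (twin k) (twin k') by rewrite same_edge_twin.
by rewrite /bsum (bq_same_edge Hv Hk) (bq_same_edge Hv Hk').
Qed.

Lemma absz_bsum_tedge (v w k l : cside n) :
  same_tedge (proj v) (proj w) -> same_tedge (proj k) (proj l) ->
  absz (bsum w l) = absz (bsum v k).
Proof.
move=> /same_tedge_edge/orP[Hv|Hv] /same_tedge_edge/orP[Hk|Hk].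
all: by rewrite (bsum_same_edge Hv Hk) ?bsum_twinl ?bsum_twinr ?abszN.
Qed.

Lemma expo_bsum (r j : side n) :
  expo glue r j = - bsum (Defs.lift j false) (Defs.lift r false).
Proof.
by rewrite /expo (_ : Defs.lift r true = twin (Defs.lift r false)) // /bsum /bq; lia.
Qed.

Definition cotriangular (x z : side n) (p : side n * side n) : bool :=
  [&& same_tedge x p.1, same_tedge z p.2, p.1 != p.2 & p.1.1 == p.2.1].

Lemma narrows_out_le_cotri (X k : cside n) :
  (narrows glue X k + narrows glue X (twin k) <= #|cotriangular (proj X) (proj k)|)%N.
Proof.
have f_inj : injective (fun u : cside n => (proj u, proj (cnext u))).
  by move=> u w E; apply: proj_cnext_inj; [exact: (congr1 fst E) | exact: (congr1 snd E)].
rewrite /narrows -cardUI (_ : #|[predI _ & _]| = 0%N) ?addn0; last first.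
  apply: eq_card0 => u; rewrite !inE; apply/negbTE/negP.
  by case/andP=> /andP[_ /same_edge_twin_excl/negbTE->] /andP[].
rewrite -(card_image f_inj); apply: subset_leq_card; apply/subsetP => p /imageP[u].
rewrite !inE -andb_orr => /andP[Hu Hk] ->.
rewrite unfold_in /cotriangular /= same_edge_tedge // eq_sym proj_cnext_neq eqxx /= andbT.
by case/orP: Hk => /same_edge_tedge; rewrite ?proj_twin.
Qed.

Lemma absz_bsum_le_cotri (X k : cside n) :
  (absz (bsum X k) <= #|cotriangular (proj X) (proj k)|)%N.
Proof.
have out := narrows_out_le_cotri X k.
have inc := narrows_out_le_cotri (twin X) (twin k).
rewrite !narrows_twin !proj_twin in inc.
rewrite /bsum /bq; lia.
Qed.

Lemma card_cotriangular_tedge (x z z' : side n) :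
  same_tedge z z' -> #|cotriangular x z| = #|cotriangular x z'|.
Proof.
move=> Ezz'; apply: eq_card => p; rewrite !unfold_in /cotriangular.
congr [&& _, _, _ & _]; apply/idP/idP; apply: same_tedge_trans => //.
by rewrite same_tedgeC.
Qed.

(** * Triangles closed under gluing *)

Lemma cadjP (a b : side n) : cadj glue a b ->
  exists s s' bb, glue s = Some (s', bb) /\
   ((a = s /\ b = (if bb then s' else send s')) \/
    (a = send s /\ b = (if bb then send s' else s'))).
Proof.
move=> /existsP [s /existsP [s' /existsP [bb /andP [/eqP Hg Hor]]]].
exists s, s', bb; split => //.
by case/orP: Hor => /andP [/eqP -> /eqP ->]; [left|right].
Qed.

(* A corner of such triangles is identified only with corners of the same
   triangles, none of which lies on the boundary: it would be a puncture. *)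
Lemma no_glue_closed_triangles (P : pred 'I_n) (t : 'I_n) : P t ->
  (forall s : side n, P s.1 -> exists s' b, glue s = Some (s', b) /\ P s'.1) -> False.
Proof.
move=> Pt Hcl.
have [y /andP [Hc Hf]] := no_punctures HT (t, ord0).
have step (a b : side n) : P a.1 -> cadj glue a b -> P b.1.
  move=> Pa /cadjP [s [s' [bb [Hg Hor]]]].
  have Ps : P s.1 by case: Hor => -[Ha _]; move: Pa; rewrite Ha.
  have [s2 [b2 [Hg2 Ps2]]] := Hcl s Ps.
  rewrite Hg in Hg2; case: Hg2 => <- _ in Ps2.
  by case: Hor => -[_ ->]; case: (bb).
have Py : P y.1 :=
  connect_invariant (P := fun z : side n => P z.1) (x := (t, ord0)) step Pt Hc.
move: Hf; rewrite /free_corner.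
have [s1 [b1 [-> _]]] := Hcl y Py.
by have [s2 [b2 [-> _]]] := Hcl (y.1, ord_pred y.2) Py.
Qed.

(* An untwisted self-gluing would make the corner between [x] and [y] a
   puncture; a twisted one leaves the third side unglued by [no_M1_arc]. *)
Lemma self_folded_sides (x y : side n) b : glue x = Some (y, b) -> x.1 = y.1 ->
  forall s : side n, s.1 = x.1 -> [\/ s = x, s = y | glue s = None].
Proof.
wlog Hy : x y / y.2 = ordS x.2.
  move=> W Hg Ht; have Hg' := glue_sym HT Hg.
  have [Exy|Hy|Hx] := ord3_cases x.2 y.2; last 2 first.
  - exact: W Hg Ht.
  - have Hx' : x.2 = ordS y.2 by rewrite Hx ordS3.
    move=> s Hs; case: (W y x Hx' Hg' (esym Ht) s (etrans Hs Ht)) => ->.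
    + by apply: Or32.
    + by apply: Or31.
    + by apply: Or33.
  case: (glue_irr HT Hg).
  by case: x y Hg Ht Exy {W Hg'} => [? ?] [? ?] /= _ -> ->.
case: x y Hy => [t c] [t' c'] /= -> Hg Ht s Hs; subst t'.
case: b Hg => Hg.
  have HM := no_M1_arc HT Hg.
  case: s Hs => [ts cs] /= ->.
  by case: (ord3_cases c cs) => ->; [apply: Or31 | apply: Or32 | apply: Or33].
exfalso; have Hg' := glue_sym HT Hg.
have [z /andP [Hc Hf]] := no_punctures HT (t, ordS c).
have Pz : z == (t, ordS c).
  apply: (connect_invariant (P := fun w => w == (t, ordS c)) _ _ Hc) => //.
  move=> a b /eqP-> /cadjP.
  move=> [s0 [s' [b0 [Hg0 [[Ha ->]|[Ha ->]]]]]].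
  - by rewrite -Ha Hg' in Hg0; case: Hg0 => <- <-.
  - case: s0 Ha Hg0 => [ts cs] Ha.
    have -> : ts = t := esym (congr1 fst Ha).
    have -> : cs = c := ordS_inj (esym (congr1 snd Ha)).
    move=> Hg0.
    by rewrite Hg0 in Hg; case: Hg => -> ->.
by move: Hf; rewrite (eqP Pz) /free_corner /= ordSK Hg Hg'.
Qed.

Lemma self_folded_excl (x y : side n) : glue y != None -> ~~ same_tedge x y ->
  (0 < #|cotriangular x x|)%N -> (0 < #|cotriangular y x|)%N -> False.
Proof.
move=> Gy Nxy /card_gt0P[[s1 s2]] /[!unfold_in] /and4P[/= Hs1 Hs2 Ns /eqP Ts].
move=> /card_gt0P[[c a]] /[!unfold_in] /and4P[/= Hc Ha _ /eqP Tca].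
have [b Hg] : exists b, glue s1 = Some (s2, b).
  apply: same_tedge_glue; last by rewrite eq_sym.
  by rewrite same_tedgeC in Hs1; apply: same_tedge_trans Hs1 Hs2.
have Ta : a.1 = s1.1.
  by case: (same_tedge_le2 Ha Hs1 Hs2) => [->|->|Es] //; rewrite Es eqxx in Ns.
have Gc : glue c != None := same_tedge_glued Gy Hc.
case: (self_folded_sides Hg Ts (etrans Tca Ta)) => Ec; last by rewrite Ec in Gc.
- by move: (same_tedge_neq Nxy Hs1 Hc); rewrite Ec eqxx.
- by move: (same_tedge_neq Nxy Hs2 Hc); rewrite Ec eqxx.
Qed.

Lemma cotri_two_triangles (x z p q : side n) :
  same_tedge z p -> same_tedge z q -> p.1 != q.1 -> (1 < #|cotriangular x z|)%N ->
  exists b1 b2, [/\ b1 != b2, same_tedge x b1, same_tedge x b2 &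
    forall s, same_tedge x s -> (s.1 == p.1) || (s.1 == q.1)].
Proof.
move=> Hp Hq Npq /card_gt1P[[b1 a1] [[b2 a2]]].
rewrite !unfold_in => -[/and4P[/= Hb1 Ha1 _ /eqP T1] /and4P[/= Hb2 Ha2 _ /eqP T2] Nba].
have Hpq : p != q by apply: contraNneq Npq => ->.
have side_z a : same_tedge z a -> a = p \/ a = q.
  move=> Ha; case: (same_tedge_le2 Ha Hp Hq) => [->|->|Epq]; [by left | by right |].
  by rewrite Epq eqxx in Hpq.
have Nb : b1 != b2.
  apply: contraNneq Nba => Eb; apply/eqP; rewrite -Eb in T2 *; congr (_, _).
  move: T1 T2; case: (side_z _ Ha1) (side_z _ Ha2) => -> [] -> // T1 T2;
    by rewrite -T1 -T2 eqxx in Npq.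
exists b1, b2; split => // s Hs.
have Hz a : same_tedge z a -> (a.1 == p.1) || (a.1 == q.1).
  by case/side_z => ->; rewrite eqxx ?orbT.
case: (same_tedge_le2 Hs Hb1 Hb2) => [->|->|Eb]; [by rewrite T1 Hz | by rewrite T2 Hz |].
by rewrite Eb eqxx in Nb.
Qed.

Lemma three_edges_two_triangles (x y z p q : side n) :
  glue x != None -> glue y != None ->
  ~~ same_tedge x y -> ~~ same_tedge x z -> ~~ same_tedge y z ->
  same_tedge z p -> same_tedge z q -> p.1 != q.1 ->
  (1 < #|cotriangular x z|)%N -> (1 < #|cotriangular y z|)%N -> False.
Proof.
move=> Gx Gy Nxy Nxz Nyz Hp Hq Npq Cx Cy.
have [b1 [b2 [Nb Hb1 Hb2 Tx]]] := cotri_two_triangles Hp Hq Npq Cx.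
have [d1 [d2 [Nd Hd1 Hd2 Ty]]] := cotri_two_triangles Hp Hq Npq Cy.
have Npq' : p != q by apply: contraNneq Npq => ->.
have Gz := same_tedge_two_glued Hp Hq Npq'.
have Tz s : same_tedge z s -> (s.1 == p.1) || (s.1 == q.1).
  move=> Hs; case: (same_tedge_le2 Hs Hp Hq) => [->|->|Epq]; rewrite ?eqxx ?orbT //.
  by rewrite Epq eqxx in Npq'.
pose W := [:: b1; b2] ++ [:: d1; d2] ++ [:: p; q].
have uW : uniq W.
  rewrite /W /= !inE !negb_or Nb Nd Npq' /=.
  rewrite !(same_tedge_neq Nxy Hb1 Hd1, same_tedge_neq Nxy Hb1 Hd2).
  rewrite !(same_tedge_neq Nxy Hb2 Hd1, same_tedge_neq Nxy Hb2 Hd2).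
  rewrite !(same_tedge_neq Nxz Hb1 Hp, same_tedge_neq Nxz Hb1 Hq).
  rewrite !(same_tedge_neq Nxz Hb2 Hp, same_tedge_neq Nxz Hb2 Hq).
  rewrite !(same_tedge_neq Nyz Hd1 Hp, same_tedge_neq Nyz Hd1 Hq).
  by rewrite !(same_tedge_neq Nyz Hd2 Hp, same_tedge_neq Nyz Hd2 Hq).
have side2 e a1 a2 w : same_tedge e a1 -> same_tedge e a2 -> w \in [:: a1; a2] ->
    same_tedge e w.
  by move=> H1 H2; rewrite !inE => /orP[]/eqP->.
have W_sides w : w \in W -> [|| same_tedge x w, same_tedge y w | same_tedge z w].
  rewrite !mem_cat => /or3P[/(side2 x _ _ _ Hb1 Hb2)|/(side2 y _ _ _ Hd1 Hd2)|
                            /(side2 z _ _ _ Hp Hq)] ->; by rewrite ?orbT.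
have WP w : w \in W -> (w.1 == p.1) || (w.1 == q.1).
  by move/W_sides/or3P => [/Tx|/Ty|/Tz].
(* the six distinct sides in W fill the two triangles [p.1] and [q.1] *)
apply: (no_glue_closed_triangles (P := fun t => (t == p.1) || (t == q.1)) (t := p.1)).
  by rewrite eqxx.
move=> s /(two_triangles_uniq_cover Npq uW erefl WP)/W_sides Hs.
have [e [Ge He Te]] : exists e, [/\ glue e != None, same_tedge e s &
    forall s', same_tedge e s' -> (s'.1 == p.1) || (s'.1 == q.1)].
  by case/or3P: Hs => Hs; [exists x | exists y | exists z].
have := same_tedge_glued Ge He; case E: (glue s) => [[s' b]|] // _.
by exists s', b; split => //; apply: Te; apply: same_tedge_partner He E.
Qed.

Lemma three_edges_one_triangle (x y z : side n) :
  ~~ same_tedge x y -> ~~ same_tedge x z -> ~~ same_tedge y z ->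
  (forall a a', same_tedge z a -> same_tedge z a' -> a.1 = a'.1) ->
  (1 < #|cotriangular x z|)%N -> (0 < #|cotriangular y z|)%N -> False.
Proof.
move=> Nxy Nxz Nyz Tz /card_gt1P[[b1 a1] [[b2 a2] [+ + Nba]]] /card_gt0P[[d c]].
rewrite !unfold_in => /and4P[/= Hb1 Ha1 _ /eqP T1] /and4P[/= Hb2 Ha2 _ /eqP T2].
move=> /and4P[/= Hd Hc _ /eqP T3].
have Nzx : ~~ same_tedge z x by rewrite same_tedgeC.
have Nzy : ~~ same_tedge z y by rewrite same_tedgeC.
have Ta1 := Tz _ _ Ha1 Hc; have Ta2 := Tz _ _ Ha2 Hc.
have Tb1 := etrans T1 Ta1; have Tb2 := etrans T2 Ta2.
have [Eb|Nb] := eqVneq b1 b2.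
  have Na : a1 != a2 by apply: contraNneq Nba => ->; rewrite Eb.
  apply: (no_four_sides_in_triangle (s1 := a1) (s2 := a2) (s3 := b1) (s4 := d));
    rewrite ?Ta1 ?Ta2 ?Tb1 ?T3 //.
  - exact: same_tedge_neq Nzx Ha1 Hb1.
  - exact: same_tedge_neq Nzy Ha1 Hd.
  - exact: same_tedge_neq Nzx Ha2 Hb1.
  - exact: same_tedge_neq Nzy Ha2 Hd.
  - exact: same_tedge_neq Nxy Hb1 Hd.
apply: (no_four_sides_in_triangle (s1 := b1) (s2 := b2) (s3 := d) (s4 := a1));
  rewrite ?Ta1 ?Tb1 ?Tb2 ?T3 //.
- exact: same_tedge_neq Nxy Hb1 Hd.
- exact: same_tedge_neq Nxz Hb1 Ha1.
- exact: same_tedge_neq Nxy Hb2 Hd.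
- exact: same_tedge_neq Nxz Hb2 Ha1.
- exact: same_tedge_neq Nyz Hd Ha1.
Qed.

Lemma cotri_exclusive (x y z : side n) :
  glue x != None -> glue y != None -> ~~ same_tedge x y ->
  (1 < #|cotriangular x z|)%N -> (1 < #|cotriangular y z|)%N -> False.
Proof.
move=> Gx Gy Nxy Cx Cy.
have [Exz|Nxz] := boolP (same_tedge x z).
  rewrite same_tedgeC in Exz.
  by apply: (self_folded_excl Gy Nxy); rewrite -(card_cotriangular_tedge _ Exz) ltnW.
have [Eyz|Nyz] := boolP (same_tedge y z).
  rewrite same_tedgeC in Eyz.
  apply: (self_folded_excl (x := y) Gx); first by rewrite same_tedgeC.
    by rewrite -(card_cotriangular_tedge _ Eyz) ltnW.
  by rewrite -(card_cotriangular_tedge _ Eyz) ltnW.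
case: (pickP [pred pq : side n * side n |
               [&& same_tedge z pq.1, same_tedge z pq.2 & pq.1.1 != pq.2.1]]).
  move=> [p q] /and3P[/= Hp Hq Npq].
  exact: three_edges_two_triangles Nxz Nyz Hp Hq Npq Cx Cy.
move=> one; apply: (three_edges_one_triangle Nxy Nxz Nyz _ Cx (ltnW Cy)) => a a' Ha Ha'.
by apply/eqP; move: (one (a, a')); rewrite /= Ha Ha' /= => /negbFE.
Qed.

Lemma narrows_back0 (v k : cside n) : ~~ same_tedge (proj v) (proj k) ->
  (1 < narrows glue v k)%N -> narrows glue (twin k) v = 0%N.
Proof.
move=> Nvk /card_gt1P[u1 [u2 [+ + Nu]]].
rewrite !inE => /andP[Hu1 Hu1'] /andP[Hu2 Hu2'].
apply/eqP; rewrite -leqn0 leqNgt; apply/negP => /card_gt0P[w].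
rewrite inE => /andP[Hw Hw'].
have Np : proj u1 != proj u2.
  by apply: contra Nu => /eqP/(same_edge_proj_inj Hu1 Hu2)->.
wlog Ew : u1 u2 Hu1 Hu1' Hu2 Hu2' Np {Nu} / proj (cnext w) = proj u1.
  move=> W; have Hv := same_edge_tedge Hw'.
  case: (same_tedge_le2 Hv (same_edge_tedge Hu1) (same_edge_tedge Hu2)) => [E|E|E].
  - exact: W Hu1 Hu1' Hu2 Hu2' Np E.
  - by apply: (W u2 u1) => //; rewrite eq_sym.
  - by rewrite E eqxx in Np.
(* [u1], [u2], [cnext u1] and [w] would be four sides of one triangle *)
have Ek1 := same_edge_tedge Hu1'; have Ek2 := same_edge_tedge Hu2'.
have Ekw : same_tedge (proj k) (proj w) by rewrite -[proj k]proj_twin same_edge_tedge.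
have Nq : proj (cnext u1) != proj w.
  apply/eqP => E; have := proj_cnext_swap (esym Ew) E.
  move=> Etw; move: Hw'.
  by rewrite Etw -same_edge_twin twinK (negbTE (same_edge_twin_excl Hu1)).
have Tu2 : (proj u2).1 = (proj u1).1.
  rewrite -[(proj u2).1]/((proj (cnext u2)).1).
  case: (same_tedge_le2 Ek2 Ek1 Ekw) => [->|->|E] //; last by rewrite E eqxx in Nq.
  by rewrite -Ew.
have Nvk' := same_tedge_neq Nvk.
apply: (no_four_sides_in_triangle (s1 := proj u1) (s2 := proj u2)
                                  (s3 := proj (cnext u1)) (s4 := proj w)).
- by [].
- by [].
- by rewrite -Ew.
- exact: Np.
- exact: Nvk' (same_edge_tedge Hu1) Ek1.
- exact: Nvk' (same_edge_tedge Hu1) Ekw.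
- exact: Nvk' (same_edge_tedge Hu2) Ek1.
- exact: Nvk' (same_edge_tedge Hu2) Ekw.
- exact: Nq.
Qed.

Lemma bq_eq2_bsum (v k : cside n) : bq glue v k = 2 -> 2 <= bsum v k.
Proof.
move=> H2; have [Evk|Nvk] := boolP (same_tedge (proj v) (proj k)).
  case/orP: (same_tedge_edge Evk) => Hk.
    by have := bq_loop (same_edge_sym Hk); rewrite H2; lia.
  have Hv : se v (twin k) by rewrite -same_edge_twin twinK same_edge_sym.
  by rewrite /bsum H2 (bq_loop Hv); lia.
have Hn : (1 < narrows glue v k)%N by move: H2; rewrite /bq; lia.
by move: H2; rewrite /bsum /bq (narrows_back0 Nvk Hn); lia.
Qed.

Lemma absz_bsum_expo (v k : cside n) :
  absz (bsum v k) = absz (expo glue (trep glue (proj k)) (proj v)).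
Proof.
rewrite expo_bsum abszN; apply: absz_bsum_tedge; rewrite proj_lift.
  exact: same_tedge_refl.
by rewrite same_tedgeC same_tedge_trep.
Qed.

End Triangulation.

(** * Exchange polynomials *)

Lemma prod_indicator (R : comNzSemiRingType) (T : finType) (P : pred T) (e : T -> nat)
    (r0 : T) (x : R) :
  \prod_(r | P r) (if r == r0 then x else 1) ^+ e r = if P r0 then x ^+ e r0 else 1.
Proof.
rewrite big_mkcond (bigD1 r0) //= eqxx big1 ?mulr1 => [|r /negbTE->].
  by case: (P r0).
by rewrite expr1n; case: (P r).
Qed.

Lemma meval_Fpoly n (glue : gluing n) (bv : pred (side n)) (r j : side n) :
  trep glue r = r -> isQv glue bv r ->
  meval (fun m => if m == enum_rank r then 2 else 1) (Fpoly glue bv j)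
  = 2 ^+ absz (expo glue r j) + 1.
Proof.
move=> Hr Hq; rewrite /Fpoly mevalD !rmorph_prod.
have evalX (P : pred (side n)) :
  \prod_(s | P s) meval (fun m => if m == enum_rank r then 2 else 1)
       ('X_(enum_rank s) ^+ absz (expo glue s j))
  = \prod_(s | P s) (if s == r then (2 : int) else 1) ^+ absz (expo glue s j).
  by apply: eq_bigr => s _; rewrite rmorphXn /= mevalXU (inj_eq enum_rank_inj).
rewrite !evalX !prod_indicator Hr eqxx Hq /=.
by case: (ltrgt0P (expo glue r j)) => [_|_|->] //; apply: addrC.
Qed.

Lemma Fpoly_eq_expo n (glue : gluing n) (bv : pred (side n)) (i j r : side n) :
  Fpoly glue bv i = Fpoly glue bv j -> trep glue r = r -> isQv glue bv r ->
  absz (expo glue r i) = absz (expo glue r j).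
Proof.
move=> HF Hr Hq; have exp2_inj : injective (GRing.exp (2 : int)) by apply: ieexprIn.
have := meval_Fpoly i Hr Hq; rewrite HF (meval_Fpoly j Hr Hq) => /addIr /exp2_inj E.
exact: esym E.
Qed.

Theorem lemma4p17 (n : nat) (glue : gluing n) (bv : pred (side n))
  (HT : is_triangulation glue)
  (i j : side n) (Hi : glue i != None) (Hj : glue j != None)
  (Hij : trep glue i != trep glue j)
  (HF : Fpoly glue bv i = Fpoly glue bv j) :
  forall (v k : cside n), proj v = i -> isQv glue bv (proj k) ->
    ~ (0 < bq glue v k /\ 0 < bq glue v (twin k)) /\ bq glue v k <> 2.
Proof.
have Nij : ~~ same_tedge glue i j by apply: contra Hij => /(trep_same_tedge HT) ->.
have bsum_small (v k : cside n) : proj v = i -> isQv glue bv (proj k) ->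
    ~ (1 < absz (bsum glue v k))%N.
  move=> Hv Hk Hvk.
  have Hexpo := Fpoly_eq_expo HF (trep_id HT (proj k)) (isQv_trep HT Hk).
  pose Y := Defs.lift j false.
  have HY : (1 < absz (bsum glue Y k))%N.
    by rewrite (absz_bsum_expo HT) proj_lift -Hexpo -Hv -(absz_bsum_expo HT).
  apply: (cotri_exclusive HT Hi Hj Nij (z := proj k)).
  - by rewrite -Hv (leq_trans Hvk (absz_bsum_le_cotri HT v k)).
  - by rewrite -[j](proj_lift j false) (leq_trans HY (absz_bsum_le_cotri HT Y k)).
move=> v k Hv Hk; split.
  by case=> H1 H2; apply: (bsum_small v k Hv Hk); rewrite /bsum; lia.
by move=> /(bq_eq2_bsum HT) H2; apply: (bsum_small v k Hv Hk); lia.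
Qed.
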